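(* Let $\alpha\in\mathbb{N}$, let $n\in\mathbb{N}$ with $3\nmid n$ and $n>6\alpha+3$, and let $\mathbb{S}=\langle 6,6\alpha+3,n\rangle$. Put $\beta_2=12\alpha+6$ and $\beta_3=3n$. Then (i) $F(\mathbb{S})=\frac{\beta_2+\beta_3}{2}-\frac{12-n}{2}$; (ii) $g(\mathbb{S})=\frac{\beta_2+\beta_3}{4}+\frac{n-10}{4}$.
   Context: $\mathbb{N}=\{0,1,2,\dots\}$. $\langle a_1,\dots,a_e\rangle$ is the set of $\mathbb{N}$-linear combinations of $a_1,\dots,a_e$. For a numerical semigroup $\mathbb{S}$, the Frobenius number $F(\mathbb{S})$ is the largest integer not in $\mathbb{S}$, and the genus $g(\mathbb{S})$ is the number of positive integers not in $\mathbb{S}$. *)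

From mathcomp Require Import all_boot all_order all_algebra.
Set Implicit Arguments. Unset Strict Implicit. Unset Printing Implicit Defensive.
Import Order.TTheory GRing.Theory Num.Theory.
Local Open Scope ring_scope.

Definition in_semigroup (gens : seq nat) (x : int) : Prop :=
  exists c : seq nat, size c = size gens /\
    x = ((\sum_(i < size gens) nth 0%N c i * nth 0%N gens i)%N)%:Z.

Definition is_frobenius (S : int -> Prop) (f : int) : Prop :=
  ~ S f /\ forall m : int, f < m -> S m.

Definition is_genus (S : int -> Prop) (g : nat) : Prop :=
  exists s : seq nat, uniq s /\
    (forall m : nat, m \in s <-> (0 < m)%N /\ ~ S m%:Z) /\ size s = g.

From mathcomp Require Import all_boot all_order all_algebra.
From mathcomp Require Import zify lra.
Import Order.TTheory GRing.Theory Num.Theory.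

Set Implicit Arguments.
Unset Strict Implicit.
Unset Printing Implicit Defensive.

(* Since 3 does not divide n, S = <6, 6a+3, n> is the gluing 3T + nN of T = <2, 2a+1>:
   every element of S is k n + 3 y with k < 3 and y in T.  T consists of the even numbers
   and the integers >= 2a+1, so its Frobenius number 2a-1 is odd and T is symmetric; hence
   S is symmetric with Frobenius number f = 2n + 3(2a-1).  Concretely, x and f - x are
   never both in S because f is not, and if x is a gap congruent to k n mod 3, then f - x
   lies in (2-k) n + 3T.  A symmetric numerical semigroup with Frobenius number f has
   exactly (f+1)/2 gaps, since x |-> f - x exchanges the gaps and the elements of [0, f]. *)

Lemma count_iota_rev (P : pred nat) f :
  count P (iota 0 f.+1) = count (fun x => P (f - x)) (iota 0 f.+1).
Proof.
rewrite -!sum1_count -/(index_iota 0 f.+1) big_nat_rev.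
by apply: eq_bigl => i; rewrite add0n subSS.
Qed.

Lemma count_predC_iota_sym (P : pred nat) f :
  (forall x, x <= f -> P (f - x) = ~~ P x) ->
  (count (predC P) (iota 0 f.+1)).*2 = f.+1.
Proof.
move=> P_sym.
have count_eq : count (predC P) (iota 0 f.+1) = count P (iota 0 f.+1).
  rewrite count_iota_rev; apply: eq_in_count => x; rewrite mem_iota => /= x_le.
  by rewrite P_sym ?negbK.
by rewrite -addnn {1}count_eq count_predC size_iota.
Qed.

Section SymmetricSemigroup.

Variables (S : int -> Prop) (memS : pred nat) (f : nat).
Hypothesis memSP : forall x : nat, S (Posz x) <-> memS x.
Hypothesis memS0 : memS 0.
Hypothesis memS_gt : forall m, f < m -> memS m.
Hypothesis memS_sym : forall x, x <= f -> memS (f - x) = ~~ memS x.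

Lemma symmetric_frobenius : is_frobenius S f.
Proof.
split.
  by move/memSP; have := memS_sym (leq0n f); rewrite subn0 memS0 => ->.
by case=> m // m_gt; apply/memSP/memS_gt; rewrite -ltz_nat.
Qed.

Lemma symmetric_genus g : g.*2 = f.+1 -> is_genus S g.
Proof.
move=> g2; exists [seq x <- iota 0 f.+1 | ~~ memS x]; split.
  by rewrite filter_uniq // iota_uniq.
split; last first.
  by apply: double_inj; rewrite size_filter g2 (count_predC_iota_sym memS_sym).
move=> m; rewrite mem_filter mem_iota add0n ltnS; split.
  case/andP=> m_gap _; split; last by move/memSP; apply/negP.
  by case: m m_gap => //; rewrite memS0.
case=> _ m_gap; have m_ngap : ~~ memS m by apply/negP => /memSP.
by rewrite m_ngap /= leqNgt; apply/negP => /memS_gt; apply/negP.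
Qed.

End SymmetricSemigroup.

Lemma in_semigroup3P p q r (x : int) :
  in_semigroup [:: p; q; r] x <-> exists c0 c1 c2, x = Posz (c0 * p + c1 * q + c2 * r).
Proof.
rewrite /in_semigroup; split.
  case=> c [size_c ->]; case: c size_c => [|c0 [|c1 [|c2 [|]]]] //= _.
  by exists c0, c1, c2; rewrite !big_ord_recr big_ord0 /= add0n.
case=> c0 [c1 [c2 ->]]; exists [:: c0; c1; c2]; split => //.
by rewrite !big_ord_recr big_ord0 /= add0n.
Qed.

Section GluedSemigroup.

Variables a n : nat.

(* [mem_T] decides membership in T = <2, 2a+1>, and [mem_layer k] in k n + 3T. *)
Definition mem_T (y : nat) := ~~ odd y || (2 * a + 1 <= y).

Definition mem_layer (k x : nat) :=
  (k * n <= x) && (3 %| x - k * n) && mem_T ((x - k * n) %/ 3).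

Definition mem_S (x : nat) := [|| mem_layer 0 x, mem_layer 1 x | mem_layer 2 x].

Local Notation f := (2 * n + 6 * a - 3).

Lemma mem_layerP k x :
  reflect (exists2 y, mem_T y & x = 3 * y + k * n) (mem_layer k x).
Proof.
apply: (iffP idP) => [|[y y_T ->]].
  by case/andP=> /andP[kn_le dvd3] y_T; exists ((x - k * n) %/ 3) => //; lia.
by rewrite /mem_layer addnK leq_addl dvdn_mulr // mulKn.
Qed.

Hypothesis n_gt : 6 * a + 3 < n.

Lemma mem_T_comb c0 c1 q : mem_T (2 * c0 + (2 * a + 1) * c1 + q * n).
Proof.
rewrite /mem_T; case: c1 q => [|c1] [|q].
- by rewrite !muln0 !mul0n !addn0 oddM.
all: by apply/orP; right; nia.
Qed.

Lemma mem_T_decomp y : mem_T y -> exists c0 c1, y = 2 * c0 + (2 * a + 1) * c1.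
Proof.
rewrite /mem_T; case: (boolP (odd y)) => [y_odd /= y_ge | y_even _].
  by exists ((y - (2 * a + 1)) %/ 2), 1; lia.
by exists (y %/ 2), 0; lia.
Qed.

Lemma mem_S_layer k x : k < 3 -> mem_layer k x -> mem_S x.
Proof. by case: k => [|[|[|]]] // _ x_k; rewrite /mem_S x_k ?orbT. Qed.

Lemma mem_SP x : in_semigroup [:: 6; 6 * a + 3; n] (Posz x) <-> mem_S x.
Proof.
rewrite in_semigroup3P; split.
  case=> c0 [c1 [c2 /eqP]]; rewrite eqz_nat => /eqP ->.
  apply: (@mem_S_layer (c2 %% 3)); first by rewrite ltn_mod.
  apply/mem_layerP; exists (2 * c0 + (2 * a + 1) * c1 + c2 %/ 3 * n).
    exact: mem_T_comb.
  rewrite {1}(divn_eq c2 3); nia.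
have in_layer k : mem_layer k x ->
    exists c0 c1 c2, Posz x = Posz (c0 * 6 + c1 * (6 * a + 3) + c2 * n).
  by case/mem_layerP=> y /mem_T_decomp[c0 [c1 ->]] ->; exists c0, c1, k; congr Posz; lia.
by case/or3P; apply: in_layer.
Qed.

Lemma mem_S_add x y : mem_S x -> mem_S y -> mem_S (x + y).
Proof.
move=> /mem_SP/in_semigroup3P[c0 [c1 [c2 [->]]]].
move=> /mem_SP/in_semigroup3P[d0 [d1 [d2 [->]]]].
by apply/mem_SP/in_semigroup3P; exists (c0 + d0), (c1 + d1), (c2 + d2); congr Posz; lia.
Qed.

Hypothesis n_ndiv3 : ~~ (3 %| n).

Lemma mem_S_gt m : f < m -> mem_S m.
Proof. by move=> m_gt; rewrite /mem_S /mem_layer /mem_T !mul0n mul1n; lia. Qed.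

Lemma mem_S_frobenius : ~~ mem_S f.
Proof.
rewrite /mem_S /mem_layer /mem_T !mul0n mul1n !negb_or.
by apply/and3P; split; lia.
Qed.

Lemma mem_layer_complement k x : k < 3 -> x <= f -> x = k * n %[mod 3] ->
  ~~ mem_layer k x -> mem_layer (2 - k) (f - x).
Proof. by case: k => [|[|[|]]] // _; rewrite /mem_layer /mem_T; lia. Qed.

Lemma mem_S_sym x : x <= f -> mem_S (f - x) = ~~ mem_S x.
Proof.
move=> x_le; case x_S: (mem_S x) => /=.
  apply: contraNF mem_S_frobenius => fx_S.
  by rewrite -(subnKC x_le); apply: mem_S_add.
move: x_S; rewrite /mem_S => /negbT; rewrite !negb_or => /and3P[x0 x1 x2].
have : x = 0 * n %[mod 3] \/ x = 1 * n %[mod 3] \/ x = 2 * n %[mod 3] by lia.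
by case=> [x_mod|[x_mod|x_mod]]; rewrite (mem_layer_complement _ x_le x_mod) ?orbT.
Qed.

End GluedSemigroup.

Local Open Scope ring_scope.

Theorem corollary3 (alpha n : nat) :
  ~~ (3 %| n)%N -> (6 * alpha + 3 < n)%N ->
  let S := in_semigroup [:: 6%N; (6 * alpha + 3)%N; n] in
  let beta2 : rat := (12 * alpha + 6)%N%:R in
  let beta3 : rat := (3 * n)%N%:R in
  (exists f : int, is_frobenius S f /\
     (f%:~R : rat) = (beta2 + beta3) / 2%:R - (12%:R - n%:R) / 2%:R) /\
  (exists g : nat, is_genus S g /\
     (g%:R : rat) = (beta2 + beta3) / 4%:R + (n%:R - 10%:R) / 4%:R).
Proof.
move=> n_ndiv3 n_gt S beta2 beta3.
have SP := mem_SP n_gt.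
have S_sym := mem_S_sym n_gt n_ndiv3.
have S_gt := mem_S_gt n_gt n_ndiv3.
have S0 : mem_S alpha n 0 by [].
rewrite /beta2 /beta3 natrD !natrM; split.
  exists (Posz (2 * n + 6 * alpha - 3)); split.
    exact: symmetric_frobenius SP S0 S_gt S_sym.
  rewrite -[LHS]pmulrn natrB; last by lia.
  by rewrite natrD !natrM; lra.
exists (n + 3 * alpha - 1)%N; split.
  by apply: (symmetric_genus SP S0 S_gt S_sym); lia.
rewrite natrB; last by lia.
by rewrite natrD natrM; lra.
Qed.
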